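(* Let $p,q,r,s\in\mathbb{C}$ with $r\neq s^2$, $q\neq s^3$, or $p\neq s^4$, and let $\delta$ be the rational space quartic in $\mathbb{C}\mathbb{P}^3$ parametrised by $t\mapsto[t^4-p,\,t^3+q,\,t^2-r,\,t+s]$, and suppose $\delta$ is of the first species. Identify $\mathbb{C}\mathbb{P}^1$ with $\mathbb{C}\cup\{\infty\}$. If $\delta$ is nodal, then there exists a parametrisation $\varphi:\mathbb{C}\mathbb{P}^1\to\delta$ such that $\varphi(0)=\varphi(\infty)$ is the node of $\delta$, and any four points $\varphi(t_1),\varphi(t_2),\varphi(t_3),\varphi(t_4)$ on $\delta\setminus\{\varphi(0)\}$ are coplanar if and only if $t_1t_2t_3t_4=1$. If $\delta$ is cuspidal, then there exists a parametrisation $\varphi:\mathbb{C}\mathbb{P}^1\to\delta$ such that $\varphi(\infty)$ is the cusp of $\delta$, and any four points $\varphi(t_1),\varphi(t_2),\varphi(t_3),\varphi(t_4)$ on $\delta\setminus\{\varphi(\infty)\}$ are coplanar if and only if $t_1+t_2+t_3+t_4=0$.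
   Context: A space quartic is an irreducible non-planar curve of degree $4$ in $\mathbb{C}\mathbb{P}^3$; it is of the first species if it is contained in more than one quadric surface. A rational space quartic of the first species has exactly one singular point, which is either a node or a cusp. *)

From mathcomp Require Import all_boot all_algebra.
From mathcomp Require Import reals complex.
Set Implicit Arguments. Unset Strict Implicit. Unset Printing Implicit Defensive.
Import GRing.Theory Num.Theory.
Local Open Scope ring_scope.

Section ProjectiveCurves.
Variable C : fieldType.

(** Points of P^3 are represented by nonzero row vectors of C^4;
    two representatives give the same point iff they are proportional. *)
Definition proj_eq (u v : 'rV[C]_4) : Prop :=
  v != 0 /\ exists c : C, c != 0 /\ u = c *: v.

(** A morphism  P^1 -> P^3  of degree d, given by four binary forms of degree d,
    encoded by their dehomogenisations  f i  (polynomials of size <= d+1).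
    P^1 is identified with  C u {oo}:  Some t  is  t  and  None  is  oo. *)
Definition pt (f : 'I_4 -> {poly C}) (d : nat) (t : option C) : 'rV[C]_4 :=
  match t with
  | Some x => \row_i (f i).[x]
  | None => \row_i (f i)`_d
  end.

(** velocity vector of a lift of the map in a local affine chart of P^1
    (chart t at finite points, chart u = 1/t at oo). *)
Definition dpt (f : 'I_4 -> {poly C}) (d : nat) (t : option C) : 'rV[C]_4 :=
  match t with
  | Some x => \row_i ((f i)^`()).[x]
  | None => \row_i (f i)`_d.-1
  end.

Definition wf_map (f : 'I_4 -> {poly C}) (d : nat) : Prop :=
  (forall i, (size (f i) <= d.+1)%N) /\ (forall t, pt f d t != 0).

Definition curve (f : 'I_4 -> {poly C}) (d : nat) (v : 'rV[C]_4) : Prop :=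
  exists t, proj_eq v (pt f d t).

Definition immersive (f : 'I_4 -> {poly C}) (d : nat) (t : option C) : Prop :=
  \rank (col_mx (pt f d t) (dpt f d t)) = 2%N.

(** g of degree e is a parametrisation of the image curve of (f,d):
    a morphism P^1 -> P^3 onto that curve, which is birational onto its image
    (injective away from finitely many parameters). *)
Definition parametrisation (g : 'I_4 -> {poly C}) (e : nat)
    (f : 'I_4 -> {poly C}) (d : nat) : Prop :=
  wf_map g e /\ (forall v, curve g e v <-> curve f d v) /\
  exists S : seq (option C), forall t u, t \notin S -> u \notin S ->
    proj_eq (pt g e t) (pt g e u) -> t = u.

(** Singular points / nodes / cusps of the image of a birational
    parametrisation (f,d), read off the normalisation P^1 -> curve. *)
Definition singular_pt (f : 'I_4 -> {poly C}) (d : nat) (v : 'rV[C]_4) : Prop :=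
  (exists t u, t <> u /\ proj_eq v (pt f d t) /\ proj_eq v (pt f d u)) \/
  (exists t, proj_eq v (pt f d t) /\ ~ immersive f d t).

(** node: exactly two branches, both smooth, with distinct tangent lines *)
Definition is_node (f : 'I_4 -> {poly C}) (d : nat) (v : 'rV[C]_4) : Prop :=
  exists t u, t <> u /\ proj_eq v (pt f d t) /\ proj_eq v (pt f d u) /\
    (forall w, proj_eq v (pt f d w) -> w = t \/ w = u) /\
    immersive f d t /\ immersive f d u /\
    \rank (col_mx (col_mx (pt f d t) (dpt f d t))
                  (col_mx (pt f d u) (dpt f d u))) = 3%N.

Definition is_cusp (f : 'I_4 -> {poly C}) (d : nat) (v : 'rV[C]_4) : Prop :=
  exists t, proj_eq v (pt f d t) /\
    (forall w, proj_eq v (pt f d w) -> w = t) /\ ~ immersive f d t.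

(** quadric surfaces: nonzero symmetric 4x4 matrices up to scaling *)
Definition on_quadric (A : 'M[C]_4) (v : 'rV[C]_4) : Prop :=
  v *m A *m v^T = 0.

Definition first_species (X : 'rV[C]_4 -> Prop) : Prop :=
  exists A B : 'M[C]_4,
    [/\ A^T = A, B^T = B, A != 0, B != 0 &
      [/\ ~ (exists c : C, A = c *: B),
          (forall v, X v -> on_quadric A v) &
          (forall v, X v -> on_quadric B v)]].

Definition coplanar (x : 'I_4 -> 'rV[C]_4) : Prop :=
  exists a : 'rV[C]_4, a != 0 /\ forall i, x i *m a^T = 0.

Definition psi (p q r s : C) : 'I_4 -> {poly C} := fun i =>
  match val i with
  | 0%N => 'X^4 - p%:P
  | 1%N => 'X^3 + q%:P
  | 2%N => 'X^2 - r%:P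
  | _ => 'X + s%:P
  end.

End ProjectiveCurves.

From mathcomp Require Import all_boot all_algebra.
From mathcomp Require Import reals complex ring.
Import GRing.Theory Num.Theory.
Local Open Scope ring_scope.

(* A Moebius reparametrisation of P^1 is again a parametrisation of the curve.
   A plane a meets the curve in the zeros of the quartic sum_i a_i g_i(t),
   which is nonzero because the curve spans P^3; so four points are coplanar
   iff such a quartic vanishes at their four parameters.  At a node, choose the
   reparametrisation with g(0) = g(oo): then every such quartic h has
   h_0 = h_4, and h = (aX + b)(X - t1)(X - t2)(X - t3) forces a = -b t1 t2 t3,
   so h(t4) = 0 iff t1 t2 t3 t4 = 1.  At a cusp x0, where psi'(x0) = k psi(x0),
   send oo to x0 with the velocity there killed: then h_3 = 0 for every h, and
   h(t4) = 0 iff t1 + t2 + t3 + t4 = 0. *)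

Set Implicit Arguments.
Unset Strict Implicit.
Unset Printing Implicit Defensive.

Section ProjectiveEquivalence.
Variable C : fieldType.
Implicit Types (u v : 'rV[C]_4) (a b : C).

Lemma proj_eq_refl v : v != 0 -> proj_eq v v.
Proof. by move=> v0; split=> //; exists 1; rewrite oner_neq0 scale1r. Qed.

Lemma proj_eq_sym u v : proj_eq u v -> proj_eq v u.
Proof.
move=> [v0 [c [c0 ->]]]; split; first by rewrite scaler_eq0 negb_or c0.
by exists c^-1; rewrite invr_eq0 c0 scalerA mulVf ?scale1r.
Qed.

Lemma proj_eqZ a b u v : a != 0 -> b != 0 ->
  proj_eq (a *: u) (b *: v) <-> proj_eq u v.
Proof.
move=> a0 b0; rewrite /proj_eq scaler_eq0 negb_or b0 /=.
split=> -[v0 [c [c0 uv]]]; split=> //.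
  exists (a^-1 * c * b); rewrite !mulf_neq0 ?invr_eq0 //.
  by rewrite -!scalerA -uv scalerA mulVf ?scale1r.
exists (a * c / b); rewrite !mulf_neq0 ?invr_eq0 //.
by rewrite uv !scalerA mulfVK.
Qed.

Lemma proj_eqZr a u v : a != 0 -> proj_eq u (a *: v) <-> proj_eq u v.
Proof. by move=> a0; have := proj_eqZ u v (oner_neq0 C) a0; rewrite scale1r. Qed.

Lemma proj_eq_trans u v w : proj_eq u v -> proj_eq v w -> proj_eq u w.
Proof.
move=> [_ [a [a0 ->]]] [w0 [b [b0 ->]]]; split=> //.
by exists (a * b); rewrite mulf_neq0 // scalerA.
Qed.

End ProjectiveEquivalence.

Section ProjectiveLine.
Variable C : fieldType.
Implicit Types (o : option C) (w : 'rV[C]_2) (M : 'M[C]_2).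

Definition hcoord o : 'rV[C]_2 :=
  if o is Some x then x *: delta_mx 0 0 + delta_mx 0 1 else delta_mx 0 0.

Definition of_hcoord w : option C :=
  if w 0 1 == 0 then None else Some (w 0 0 / w 0 1).

Lemma rV2P (u v : 'rV[C]_2) : u 0 0 = v 0 0 -> u 0 1 = v 0 1 -> u = v.
Proof.
move=> e0 e1; apply/rowP=> -[[|[|//]] j2].
  by rewrite (_ : Ordinal j2 = 0) //; apply: val_inj.
by rewrite (_ : Ordinal j2 = 1) //; apply: val_inj.
Qed.

Lemma hcoord0 o : hcoord o 0 0 = if o is Some x then x else 1.
Proof. by case: o => [x|]; rewrite !mxE /= ?mulr1 ?addr0. Qed.

Lemma hcoord1 o : hcoord o 0 1 = if o is Some _ then 1 else 0.
Proof. by case: o => [x|]; rewrite !mxE /= ?mulr0 ?add0r. Qed.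

Lemma hcoord_neq0 o : hcoord o != 0.
Proof.
apply/negP=> /eqP o0.
move: (hcoord0 o) (hcoord1 o); rewrite o0 !mxE.
by case: o {o0} => [x _|] /eqP; rewrite eq_sym oner_eq0.
Qed.

Lemma hcoordK : cancel hcoord of_hcoord.
Proof.
by case=> [x|]; rewrite /of_hcoord hcoord0 hcoord1 ?oner_eq0 ?eqxx ?divr1.
Qed.

Lemma of_hcoordZ a w : a != 0 -> of_hcoord (a *: w) = of_hcoord w.
Proof.
move=> a0; rewrite /of_hcoord !mxE mulf_eq0 (negbTE a0) /=.
by case: eqP => // /eqP w1; congr Some; rewrite invfM mulrACA mulfV ?mul1r.
Qed.

Lemma of_hcoordK w : w != 0 -> exists2 a, a != 0 & hcoord (of_hcoord w) = a *: w.
Proof.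
rewrite /of_hcoord; have [w1 | w1] := eqVneq (w 0 1) 0 => [w0|_].
  have {}w0 : w 0 0 != 0.
    by apply: contraNneq w0 => w00; apply/eqP/rV2P; rewrite mxE.
  exists (w 0 0)^-1; rewrite ?invr_eq0 //.
  by apply: rV2P; rewrite ?hcoord0 ?hcoord1 !mxE ?w1 ?mulr0 // mulVf.
exists (w 0 1)^-1; rewrite ?invr_eq0 //.
by apply: rV2P; rewrite ?hcoord0 ?hcoord1 !mxE ?mulVf // mulrC.
Qed.

Lemma col_mx2E0 (u v : 'rV[C]_2) j : (col_mx u v : 'M_2) 0 j = u 0 j.
Proof. by rewrite mxE; case: splitP => i //; rewrite ord1. Qed.

Lemma col_mx2E1 (u v : 'rV[C]_2) j : (col_mx u v : 'M_2) 1 j = v 0 j.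
Proof. by rewrite mxE; case: splitP => i //; rewrite ord1. Qed.

Lemma hcoord_mul_col_mx o (u v : 'rV[C]_2) :
  hcoord o *m col_mx u v = if o is Some x then x *: u + v else u.
Proof.
have rowE0 : delta_mx 0 0 *m col_mx u v = u.
  by rewrite -rowE; apply/rowP=> j; rewrite mxE col_mx2E0.
have rowE1 : delta_mx 0 1 *m col_mx u v = v.
  by rewrite -rowE; apply/rowP=> j; rewrite mxE col_mx2E1.
by case: o => [x|]; rewrite ?mulmxDl -?scalemxAl ?rowE0 ?rowE1.
Qed.

Lemma det_mx2 M : \det M = M 0 0 * M 1 1 - M 0 1 * M 1 0.
Proof.
rewrite (expand_det_row _ 0) !big_ord_recl big_ord0 /cofactor !det_mx11 !mxE /=.
have -> : lift 0 0 = 1 :> 'I_2 by apply: val_inj.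
have -> : lift 1 0 = 0 :> 'I_2 by apply: val_inj.
by rewrite /bump /= expr0 expr1; ring.
Qed.

Lemma unitmx_col_mx2 (u v : 'rV[C]_2) :
  (col_mx u v \in unitmx) = (u 0 0 * v 0 1 - u 0 1 * v 0 0 != 0).
Proof. by rewrite unitmxE unitfE det_mx2 !col_mx2E0 !col_mx2E1. Qed.

Lemma unitmx_col_mx_hcoord t u a : t != u -> a != 0 ->
  col_mx (a *: hcoord t) (hcoord u) \in unitmx.
Proof.
move=> tu a0; rewrite unitmx_col_mx2 !mxE !hcoord0 !hcoord1 -!mulrA -mulrBr mulf_neq0 //.
case: t u tu => [x|] [y|] //= tu;
  rewrite ?(mulr0, mul0r, mulr1, mul1r, subr0, sub0r, oppr_eq0, oner_eq0) //.
by rewrite subr_eq0 -(inj_eq (@Some_inj _)).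
Qed.

Lemma hcoord_mulmx_neq0 o M : M \in unitmx -> hcoord o *m M != 0.
Proof.
move=> M_unit; apply: contra_neq (hcoord_neq0 o) => oM0.
by rewrite -[hcoord o](mulmxK M_unit) oM0 mul0mx.
Qed.

Definition mobius M o : option C := of_hcoord (hcoord o *m M).

Lemma mobiusK M : M \in unitmx -> cancel (mobius M) (mobius (invmx M)).
Proof.
move=> M_unit o; rewrite /mobius.
have [a a0 ->] := of_hcoordK (hcoord_mulmx_neq0 o M_unit).
by rewrite -scalemxAl mulmxK // of_hcoordZ // hcoordK.
Qed.

Lemma mobiusKV M : M \in unitmx -> cancel (mobius (invmx M)) (mobius M).
Proof.
move=> M_unit; rewrite -{2}[M]invmxK.
by apply: mobiusK; rewrite unitmx_inv.
Qed.

End ProjectiveLine.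

Definition quartic_form (R : comNzRingType) (c : nat -> R) (x y : R) : R :=
  c 0%N * y ^+ 4 + c 1%N * x * y ^+ 3 + c 2%N * x ^+ 2 * y ^+ 2
  + c 3%N * x ^+ 3 * y + c 4%N * x ^+ 4.

Lemma quartic_formZ (R : comNzRingType) (c : nat -> R) a x y :
  quartic_form c (a * x) (a * y) = a ^+ 4 * quartic_form c x y.
Proof. by rewrite /quartic_form; ring. Qed.

Section QuarticParametrisations.
Variable C : fieldType.
Implicit Types (f : {poly C}) (F : 'I_4 -> {poly C}) (u v w : 'rV[C]_2).

Lemma horner_quartic f x : (size f <= 5)%N -> f.[x] = quartic_form (nth 0 f) x 1.
Proof.
move=> f5; rewrite (horner_coef_wide _ f5) !big_ord_recl big_ord0 /quartic_form.
by rewrite /bump /=; ring.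
Qed.

Lemma coef4_quartic f : f`_4 = quartic_form (nth 0 f) 1 0.
Proof. by rewrite /quartic_form; ring. Qed.

Definition hpt F w : 'rV[C]_4 := \row_i quartic_form (nth 0 (F i)) (w 0 0) (w 0 1).

Lemma pt_hpt F o : (forall i, (size (F i) <= 5)%N) -> pt F 4 o = hpt F (hcoord o).
Proof.
move=> F5; apply/rowP=> i; rewrite [RHS]mxE hcoord0 hcoord1.
by case: o => [x|]; rewrite mxE ?horner_quartic ?coef4_quartic.
Qed.

Lemma hptZ F a w : hpt F (a *: w) = a ^+ 4 *: hpt F w.
Proof. by apply/rowP=> i; rewrite !mxE quartic_formZ. Qed.

Lemma hpt_of_hcoord F w : (forall i, (size (F i) <= 5)%N) -> w != 0 ->
  exists2 k, k != 0 & hpt F w = k *: pt F 4 (of_hcoord w).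
Proof.
move=> F5 w0; have [a a0 aw] := of_hcoordK w0.
exists (a ^+ 4)^-1; first by rewrite invr_eq0 expf_neq0.
by rewrite pt_hpt // aw hptZ scalerA mulVf ?expf_neq0 ?scale1r.
Qed.

(* [reparam4 u v f] dehomogenises t |-> f(t u + v): the reparametrisation by
   the Moebius map sending oo to [u] and 0 to [v]. *)
Definition reparam4 u v f : {poly C} :=
  quartic_form (fun i => (f`_i)%:P)
    ((u 0 0)%:P * 'X + (v 0 0)%:P) ((u 0 1)%:P * 'X + (v 0 1)%:P).

Lemma coef_lin (a b : C) i :
  (a%:P * 'X + b%:P)`_i = if i is j.+1 then a *+ (j == 0)%N else b.
Proof.
by rewrite coefD coefCM coefX coefC; case: i => [|[|i]] /=; rewrite ?mulr0 ?mulr1 ?addr0 ?add0r.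
Qed.

Lemma coef_linM (a b : C) (P : {poly C}) i :
  ((a%:P * 'X + b%:P) * P)`_i = (if i is j.+1 then a * P`_j else 0) + b * P`_i.
Proof. by rewrite mulrDl -mulrA coefD !coefCM coefXM; case: i => [|i]; rewrite ?mulr0. Qed.

Lemma coef4_reparam4 u v f : (reparam4 u v f)`_4 = quartic_form (nth 0 f) (u 0 0) (u 0 1).
Proof.
rewrite /reparam4 /quartic_form !exprS !expr0 ?mulr1 -!mulrA !coefD !coefCM.
by rewrite !coef_linM !coef_lin /=; ring.
Qed.

Lemma size_reparam4 u v f : (size (reparam4 u v f) <= 5)%N.
Proof.
apply/leq_sizeP=> j j5; rewrite -(subnK j5) /reparam4 /quartic_form.
rewrite !exprS !expr0 ?mulr1 -!mulrA !coefD !coefCM !addnS.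
by rewrite !coef_linM !coef_lin /=; ring.
Qed.

Lemma pt_reparam4 u v F o :
  pt (fun i => reparam4 u v (F i)) 4 o = hpt F (hcoord o *m col_mx u v).
Proof.
rewrite hcoord_mul_col_mx; apply/rowP=> i.
case: o => [x|]; rewrite !mxE ?coef4_reparam4 //.
by rewrite /reparam4 /quartic_form !(hornerD, hornerM, horner_exp, hornerC, hornerX); ring.
Qed.

(* By Euler's relation for binary forms, this choice of the image [v] of 0
   turns the velocity at oo into f' - k f. *)
Lemma coef3_reparam4_cusp f (x k : C) : (4 : C) != 0 -> (size f <= 5)%N ->
  (reparam4 (hcoord (Some x)) (delta_mx 0 0 - (k / 4) *: hcoord (Some x)) f)`_3
    = f^`().[x] - k * f.[x].
Proof.
move=> four0 f5; have d5 : (size f^`() <= 5)%N.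
  by apply/leq_sizeP=> i i5; rewrite coef_deriv nth_default ?mul0rn // (leq_trans f5 (leqW i5)).
rewrite (horner_quartic _ d5) (horner_quartic _ f5) /reparam4 /quartic_form !coef_deriv.
rewrite !exprS !expr0 ?mulr1 -!mulrA !coefD !coefCM !coef_linM !coef_lin !mxE /=.
by rewrite (nth_default 0 f5); field.
Qed.

End QuarticParametrisations.

Section LinearAlgebra.
Variable C : fieldType.

Lemma exists_orthogonal m n (u : 'I_m -> 'rV[C]_n) :
  (m < n)%N -> exists2 a : 'rV[C]_n, a != 0 & forall i, u i *m a^T = 0.
Proof.
move=> mn; pose A := \matrix_(i < m) u i.
have : kermx A^T != 0.
  by rewrite -mxrank_eq0 mxrank_ker mxrank_tr subn_eq0 -ltnNge (leq_ltn_trans (rank_leq_row A)).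
case/rowV0Pn=> a /sub_kermxP aA a0; exists a => // i.
by rewrite -(rowK u i) -row_mul -[A *m _]trmxK trmx_mul trmxK aA trmx0 row0.
Qed.

Lemma proportional_of_rank_col_mx n (u v : 'rV[C]_n) :
  ~ \rank (col_mx u v) = 2%N -> u != 0 -> exists k, v = k *: u.
Proof.
move=> rk2 u0; have [vu | vu] := boolP (v <= u)%MS.
  have [D ->] := submxP vu; exists (D 0 0).
  by rewrite {1}(mx11_scalar D) mul_scalar_mx.
exfalso; apply: rk2; apply/eqP; rewrite eqn_leq rank_leq_row -addsmxE.
have : (u < u + v)%MS.
  by rewrite ltmxE addsmxSl /=; apply: contra vu; apply: submx_trans (addsmxSr u v).
by move/rank_ltmx; rewrite rank_rV u0.
Qed.

Lemma mx11_eq0 (A : 'M[C]_1) : A = 0 <-> A 0 0 = 0.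
Proof. by split=> [->|A0]; [rewrite mxE | apply/matrixP=> i j; rewrite !ord1 A0 mxE]. Qed.

End LinearAlgebra.

Section Parametrisations.
Variable C : fieldType.
Implicit Types (F G H : 'I_4 -> {poly C}) (a : 'rV[C]_4).

Lemma parametrisation_transfer G F H d e k (m m' : option C -> option C) :
    cancel m m' -> cancel m' m -> (forall i, (size (G i) <= d.+1)%N) ->
    (forall o, exists2 c, c != 0 & pt G d o = c *: pt F e (m o)) ->
  parametrisation F e H k -> parametrisation G d H k.
Proof.
move=> mK m'K G_size GF [[_ F0] [FH [S FS]]].
have G0 o : pt G d o != 0 by have [c c0 ->] := GF o; rewrite scaler_eq0 negb_or c0 F0.
split; [by [] | split=> [w|]].
  rewrite -FH; split=> -[o wo].
    by have [c c0 Go] := GF o; exists (m o); apply/(proj_eqZr _ _ c0); rewrite -Go.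
  by exists (m' o); have [c c0 ->] := GF (m' o); rewrite m'K; apply/proj_eqZr.
exists (map m' S) => t u tS uS; have [ct ct0 ->] := GF t; have [cu cu0 ->] := GF u.
have notin_S o : o \notin map m' S -> m o \notin S.
  by apply: contra => oS; rewrite -(mK o) map_f.
by move/(proj_eqZ _ _ ct0 cu0)/(FS _ _ (notin_S _ tS) (notin_S _ uS))/(can_inj mK).
Qed.

Lemma parametrisation_reparam4 F H k u v :
    (forall i, (size (F i) <= 5)%N) -> col_mx u v \in unitmx ->
  parametrisation F 4 H k -> parametrisation (fun i => reparam4 u v (F i)) 4 H k.
Proof.
move=> F_size uv_unit; apply: (parametrisation_transfer (mobiusK uv_unit) (mobiusKV uv_unit)).
  by move=> i; apply: size_reparam4.
move=> o; rewrite pt_reparam4.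
exact: hpt_of_hcoord F_size (hcoord_mulmx_neq0 o uv_unit).
Qed.

Definition section_poly F a : {poly C} := \sum_i a 0 i *: F i.

Lemma coef_section_poly F a k : (section_poly F a)`_k = \sum_i a 0 i * (F i)`_k.
Proof. by rewrite coef_sum; apply: eq_bigr => i _; rewrite coefZ. Qed.

Lemma size_section_poly F a n :
  (forall i, (size (F i) <= n)%N) -> (size (section_poly F a) <= n)%N.
Proof.
move=> F_size; apply/leq_sizeP=> k nk; rewrite coef_section_poly big1 // => i _.
by rewrite nth_default ?mulr0 // (leq_trans (F_size i)).
Qed.

Lemma pt_mul_trmx F d o a : (pt F d o *m a^T) 0 0 =
  if o is Some x then (section_poly F a).[x] else (section_poly F a)`_d.
Proof.
rewrite mxE; case: o => [x|]; rewrite ?horner_sum ?coef_section_poly.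
  by apply: eq_bigr => i _; rewrite !mxE hornerZ mulrC.
by apply: eq_bigr => i _; rewrite !mxE mulrC.
Qed.

Lemma section_poly_root F d a x :
  root (section_poly F a) x <-> pt F d (Some x) *m a^T = 0.
Proof. by rewrite mx11_eq0 pt_mul_trmx; split=> /eqP. Qed.

Lemma section_poly_eq0 F d a : section_poly F a = 0 -> forall o, pt F d o *m a^T = 0.
Proof.
move=> Fa0 o; apply/mx11_eq0; rewrite pt_mul_trmx Fa0.
by case: o => [x|]; rewrite ?horner0 ?coef0.
Qed.

Lemma parametrisation_orthogonal G F d e a : parametrisation G e F d ->
  (forall o, pt G e o *m a^T = 0) -> forall o, pt F d o *m a^T = 0.
Proof.
move=> [_ [GF _]] Ga o; have [->|F0] := eqVneq (pt F d o) 0; first by rewrite mul0mx.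
have [o' [_ [c [_ ->]]]] : curve G e (pt F d o) by apply/GF; exists o; apply: proj_eq_refl.
by rewrite -scalemxAl Ga scaler0.
Qed.

Lemma injective_of_distinct_pts G d (tt : 'I_4 -> C) : wf_map G d ->
    (forall i j, i != j -> ~ proj_eq (pt G d (Some (tt i))) (pt G d (Some (tt j)))) ->
  injective tt.
Proof.
move=> [_ G0] distinct i j tij; apply/eqP; apply: contraT => /distinct; rewrite tij.
by case; apply: proj_eq_refl.
Qed.

Lemma coplanar_section_rootP F d (tt : 'I_4 -> C)
    (P : {poly C} -> Prop) (cond : Prop) :
    (forall a, a != 0 -> P (section_poly F a)) ->
    (forall h, P h -> (forall i : 'I_3, root h (tt (widen_ord (leqnSn 3) i))) ->
       root h (tt ord_max) <-> cond) ->
  coplanar (fun i => pt F d (Some (tt i))) <-> cond.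
Proof.
move=> PF last_root; split=> [[a [a0 orth]] | tt_cond].
  by apply/(last_root _ (PF a a0)) => [i|]; apply/(section_poly_root _ d).
pose u (i : 'I_3) := pt F d (Some (tt (widen_ord (leqnSn 3) i))).
have [a a0 orth] := exists_orthogonal u (ltnSn 3).
have roots i : root (section_poly F a) (tt (widen_ord (leqnSn 3) i)).
  exact/(section_poly_root _ d)/orth.
exists a; split=> // i; apply/(section_poly_root _ d).
have [->|i_max] := eqVneq i ord_max; first exact/(last_root _ (PF a a0) roots).
have i3 : (i < 3)%N.
  by rewrite ltn_neqAle -ltnS ltn_ord andbT; apply: contraNneq i_max => i3; apply/eqP/val_inj.
by rewrite (_ : i = widen_ord (leqnSn 3) (Ordinal i3)) //; apply: val_inj.
Qed.

End Parametrisations.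

(* With n roots known, h = (aX + b) * prod_i (X - t i), and a linear relation
   between a and b read off the coefficients locates the last root. *)
Section ExtraRoot.
Variables (C : fieldType) (n : nat) (t : 'I_n.+1 -> C) (h : {poly C}).
Hypotheses (t_inj : injective t) (h_neq0 : h != 0) (size_h : (size h <= n.+2)%N).
Hypothesis h_roots : forall i : 'I_n, root h (t (widen_ord (leqnSn n) i)).

Let rs := [seq t (widen_ord (leqnSn n) i) | i : 'I_n].
Let c := \prod_(x <- rs) ('X - x%:P).

Let size_rs : size rs = n.
Proof. by rewrite size_map -cardE card_ord. Qed.

Let c_monic : c \is monic. Proof. exact: monic_prod_XsubC. Qed.

Let size_c : size c = n.+1. Proof. by rewrite size_prod_XsubC size_rs. Qed.

Let last_notin_rs : t ord_max \notin rs.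
Proof.
apply/mapP=> -[i _ /t_inj /(congr1 val)] /= ni.
by move: (ltn_ord i); rewrite -ni ltnn.
Qed.

Let h_factor : exists a b, h = (a%:P * 'X + b%:P) * c.
Proof.
have roots_rs : all (root h) rs by apply/allP=> _ /mapP[i _ ->]; apply: h_roots.
have uniq_rs : uniq_roots rs.
  rewrite uniq_rootsE map_inj_uniq ?enum_uniq // => i j /t_inj.
  by move=> /(congr1 val) /= ij; apply: val_inj.
have [q hq] := uniq_roots_prod_XsubC roots_rs uniq_rs.
have q0 : q != 0 by apply: contraNneq h_neq0 => q0; rewrite hq q0 mul0r.
have size_q : (size q <= 2)%N.
  by move: size_h; rewrite hq size_Mmonic // size_c addnS /= -addn2 addnC leq_add2l.
exists q`_1, q`_0; rewrite hq; congr (_ * _); apply/polyP=> -[|[|k]];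
  by rewrite coef_lin //= nth_default // (leq_trans size_q).
Qed.

Let prod_last : \prod_(i < n.+1) (- t i) = (- 1) ^+ n.+1 * (\prod_(x <- rs) x * t ord_max).
Proof. by rewrite prodrN card_ord big_ord_recr big_image. Qed.

Let sum_last : \sum_(i < n.+1) t i = \sum_(x <- rs) x + t ord_max.
Proof. by rewrite big_ord_recr big_image. Qed.

Let root_last a b :
  h = (a%:P * 'X + b%:P) * c -> root h (t ord_max) = (a * t ord_max + b == 0).
Proof.
move=> ->; rewrite rootM root_prod_XsubC (negbTE last_notin_rs) orbF.
by rewrite /root !(hornerD, hornerM, hornerC, hornerX).
Qed.

Let coefn_c : c`_n = 1.
Proof. by have /monicP := c_monic; rewrite lead_coefE size_c. Qed.

Lemma root_last_prod :
  h`_0 = h`_n.+1 -> root h (t ord_max) <-> \prod_(i < n.+1) (- t i) = 1.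
Proof.
have [a [b hab]] := h_factor; pose P := \prod_(x <- rs) x.
have c0 : c`_0 = (-1) ^+ n * P by rewrite coef0_prod_XsubC size_rs.
have cn1 : c`_n.+1 = 0 by rewrite nth_default // size_c.
rewrite {1 2}hab !coef_linM c0 coefn_c cn1 add0r mulr1 mulr0 addr0 => ab.
have b0 : b != 0.
  by apply: contraNneq h_neq0 => b0; rewrite hab -ab b0 !mul0r addr0 mul0r.
rewrite (root_last hab) prod_last -ab.
have -> : b * ((-1) ^+ n * P) * t ord_max + b = b * (1 - (-1) ^+ n.+1 * (P * t ord_max)).
  by rewrite exprS; ring.
by rewrite mulf_eq0 (negbTE b0) subr_eq0 eq_sym; split=> /eqP.
Qed.

Lemma root_last_sum :
  (0 < n)%N -> h`_n = 0 -> root h (t ord_max) <-> \sum_(i < n.+1) t i = 0.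
Proof.
move=> n0; have [a [b hab]] := h_factor; pose S := \sum_(x <- rs) x.
have cn' : c`_n.-1 = - S by rewrite -size_rs coefPn_prod_XsubC // size_rs -lt0n.
have hn : h`_n = a * c`_n.-1 + b * c`_n by rewrite hab coef_linM -(prednK n0).
rewrite hn cn' coefn_c mulr1 => hS.
have ba : b = a * S by apply/eqP; rewrite -subr_eq0 -hS; apply/eqP; ring.
have a0 : a != 0.
  by apply: contraNneq h_neq0 => a0; rewrite hab ba a0 !mul0r addr0 mul0r.
rewrite (root_last hab) sum_last ba -mulrDr mulf_eq0 (negbTE a0) addrC.
by split=> /eqP.
Qed.

End ExtraRoot.

Lemma sum_ord4 (R : nmodType) (F : 'I_4 -> R) : \sum_(i < 4) F i = F 0 + F 1 + F 2 + F 3.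
Proof.
rewrite !big_ord_recl big_ord0 addr0 !addrA.
by congr (F _ + F _ + F _ + F _); apply: val_inj.
Qed.

Lemma ord4P (i : 'I_4) : [\/ i = 0, i = 1, i = 2 | i = 3].
Proof.
case: i => -[|[|[|[|//]]]] i4; [constructor 1 | constructor 2 | constructor 3 | constructor 4];
  exact: val_inj.
Qed.

Section Psi.
Variables (C : numClosedFieldType) (p q r s : C).
Notation ps := (psi p q r s).
Hypothesis pqrs : r != s ^+ 2 \/ q != s ^+ 3 \/ p != s ^+ 4.

Lemma size_psi i : (size (ps i) <= 5)%N.
Proof.
case: (ord4P i) => ->; rewrite /psi /=.
- by rewrite size_XnsubC.
- by rewrite size_XnaddC.
- by rewrite size_XnsubC.
- by rewrite size_XaddC.
Qed.

Lemma horner_psi x : [/\ (ps 0).[x] = x ^+ 4 - p, (ps 1).[x] = x ^+ 3 + q,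
  (ps 2).[x] = x ^+ 2 - r & (ps 3).[x] = x + s].
Proof. by split; rewrite /psi /= !(hornerD, hornerN, hornerXn, hornerX, hornerC). Qed.

Lemma psi_wf : wf_map ps 4.
Proof.
split=> [|[x|]]; first exact: size_psi.
  have entry_neq0 i : (ps i).[x] != 0 -> pt ps 4 (Some x) != 0.
    by move=> psx; apply: contraNneq psx => /rowP/(_ i); rewrite /= !mxE => ->.
  have [e0 e1 e2 e3] := horner_psi x.
  have [/eqP|xs] := eqVneq (x + s) 0; last by apply: (entry_neq0 3); rewrite e3.
  rewrite addr_eq0 => /eqP xs; case: pqrs => [rs|[qs|ps4]].
  - by apply: (entry_neq0 2); rewrite e2 xs sqrrN subr_eq0 eq_sym.
  - apply: (entry_neq0 1); rewrite e1 xs (_ : _ + q = q - s ^+ 3) ?subr_eq0 //; ring.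
  - apply: (entry_neq0 0); rewrite e0 xs (_ : _ - p = s ^+ 4 - p) ?subr_eq0 1?eq_sym //.
    ring.
apply: contraNneq (oner_neq0 C) => /rowP/(_ 0); rewrite !mxE /psi /=.
by rewrite coefB coefXn coefC eqxx subr0 => /eqP.
Qed.

(* Two parameters x != y, both != -s, with the same image satisfy
   x + y = sigma and x y = -r - s sigma (the 2x2 minors against the last
   coordinate), so both are roots of double_point_poly. *)
Let sigma := (q - s * r) / (s ^+ 2 - r).
Let double_point_poly : {poly C} := 'X^2 - sigma%:P * 'X + (- r - s * sigma)%:P.

Lemma psi_double_point x y : x != y -> x != - s -> y != - s ->
  proj_eq (pt ps 4 (Some x)) (pt ps 4 (Some y)) -> root double_point_poly x.
Proof.
move=> xy xs ys [_ [c [_ /rowP e]]].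
have minor i j : (ps i).[x] * (ps j).[y] = (ps j).[x] * (ps i).[y].
  by move: (e i) (e j); rewrite !mxE => -> ->; ring.
have [ex0 ex1 ex2 ex3] := horner_psi x; have [ey0 ey1 ey2 ey3] := horner_psi y.
have cancel_xy z : (x - y) * z = 0 -> z = 0.
  by move/eqP; rewrite mulf_eq0 subr_eq0 (negbTE xy) => /eqP.
have e1 : x * y + s * (x + y) + r = 0.
  apply: cancel_xy; transitivity ((x ^+ 2 - r) * (y + s) - (x + s) * (y ^+ 2 - r)); first by ring.
  by have := minor 2 3; rewrite ex2 ex3 ey2 ey3 => ->; rewrite subrr.
have e2 : x * y * (x + y) + s * (x ^+ 2 + x * y + y ^+ 2) - q = 0.
  apply: cancel_xy; transitivity ((x ^+ 3 + q) * (y + s) - (x + s) * (y ^+ 3 + q)); first by ring.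
  by have := minor 1 3; rewrite ex1 ex3 ey1 ey3 => ->; rewrite subrr.
have sr : s ^+ 2 - r != 0.
  rewrite (_ : _ - r = (x + s) * (y + s) - (x * y + s * (x + y) + r)); last by ring.
  by rewrite e1 subr0 mulf_neq0 // addr_eq0.
have xy_sigma : x + y = sigma.
  rewrite /sigma -[x + y](mulfK sr); congr (_ / _); apply/eqP; rewrite -subr_eq0; apply/eqP.
  transitivity (x * y * (x + y) + s * (x ^+ 2 + x * y + y ^+ 2) - q
    - (x + y - s) * (x * y + s * (x + y) + r)); first by ring.
  by rewrite e1 e2 mulr0 subr0.
rewrite /root /double_point_poly.
rewrite !(hornerD, hornerN, hornerM, hornerXn, hornerX, hornerC) -xy_sigma.
by apply/eqP; transitivity (- (x * y + s * (x + y) + r)); [ring | rewrite e1 oppr0].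
Qed.

Lemma psi_birational : exists S : seq (option C), forall t u,
  t \notin S -> u \notin S -> proj_eq (pt ps 4 t) (pt ps 4 u) -> t = u.
Proof.
have [zs Qzs] := closed_field_poly_normal double_point_poly.
have Q2 : double_point_poly`_2 = 1.
  by rewrite /double_point_poly !(coefB, coefD, coefCM, coefXn, coefX, coefC) /= mulr0 subr0 addr0.
have Q0 : double_point_poly != 0 by apply: contra_eq_neq Q2 => ->; rewrite coef0 eq_sym oner_neq0.
exists [:: None, Some (- s) & map Some zs] => -[x|] -[y|] //; rewrite !inE /=.
rewrite !(inj_eq (@Some_inj _)) !(mem_map (@Some_inj _)) => /norP[xs xzs] /norP[ys _] xy.
congr Some; apply/eqP; apply: contraT => x_y; case/negP: xzs.
by have := psi_double_point x_y xs ys xy; rewrite Qzs rootZ ?lead_coef_eq0 // root_prod_XsubC.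
Qed.

Lemma psi_parametrisation : parametrisation ps 4 ps 4.
Proof. by split; [exact: psi_wf | split; [by [] | exact: psi_birational]]. Qed.

Lemma psi_nondegenerate (a : 'rV[C]_4) : (forall x, pt ps 4 (Some x) *m a^T = 0) -> a = 0.
Proof.
move=> orth; have sec0 : section_poly ps a = 0.
  apply: (@roots_geq_poly_eq0 _ _ [seq i%:R | i <- iota 0 5]).
  - by apply/allP=> _ /mapP[i _ ->]; apply/(section_poly_root _ 4)/orth.
  - by rewrite map_inj_uniq ?iota_uniq // => i j /eqP; rewrite eqr_nat => /eqP.
  - by rewrite size_map size_iota size_section_poly // => i; apply: size_psi.
have coef k : \sum_i a 0 i * (ps i)`_k = 0 by rewrite -coef_section_poly sec0 coef0.
apply/rowP=> i; rewrite mxE.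
case: (ord4P i) => ->; [move: (coef 4%N) | move: (coef 3%N) | move: (coef 2%N) | move: (coef 1%N)];
  by rewrite sum_ord4 /psi /= !(coefB, coefD, coefXn, coefX, coefC) /=
    !(subr0, addr0, add0r, mulr0, mulr1).
Qed.

Lemma psi_immersive_oo : immersive ps 4 None.
Proof.
have [//|/eqP rk] := eqVneq (\rank (col_mx (pt ps 4 None) (dpt ps 4 None))) 2%N.
have oo0 : pt ps 4 None != 0.
  apply: contraNneq (oner_neq0 C) => /rowP/(_ 0); rewrite !mxE /psi /=.
  by rewrite coefB coefXn coefC eqxx subr0 => /eqP.
have [k /rowP/(_ 1)] := proportional_of_rank_col_mx rk oo0.
rewrite !mxE /psi /= !(coefD, coefXn, coefC) /= !addr0 mulr0 => /eqP.
by rewrite oner_eq0.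
Qed.

Lemma psi_section_poly_neq0 g e a :
  parametrisation g e ps 4 -> a != 0 -> section_poly g a != 0.
Proof.
move=> g_param; apply: contra_neq => /section_poly_eq0 orth.
by apply: psi_nondegenerate => x; apply: (parametrisation_orthogonal g_param).
Qed.

Lemma node_coplanar g (tt : 'I_4 -> C) :
    parametrisation g 4 ps 4 -> pt g 4 (Some 0) = pt g 4 None -> injective tt ->
  coplanar (fun i => pt g 4 (Some (tt i))) <-> \prod_(i < 4) tt i = 1.
Proof.
move=> g_param g0oo tt_inj; have [[g_size _] _] := g_param.
apply: (@coplanar_section_rootP _ _ _ _ (fun h => [/\ h != 0, (size h <= 5)%N & h`_0 = h`_4])).
  move=> a a0; split; [exact: psi_section_poly_neq0 g_param a0 | exact: size_section_poly |].
  by rewrite -horner_coef0 -(pt_mul_trmx g 4 (Some 0)) g0oo pt_mul_trmx.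
move=> h [h0 h5 h04] roots; rewrite (root_last_prod tt_inj h0 h5 roots h04).
by rewrite prodrN card_ord -signr_odd /= expr0 mul1r.
Qed.

Lemma cusp_coplanar g (tt : 'I_4 -> C) :
    parametrisation g 4 ps 4 -> (forall i, (g i)`_3 = 0) -> injective tt ->
  coplanar (fun i => pt g 4 (Some (tt i))) <-> \sum_(i < 4) tt i = 0.
Proof.
move=> g_param g3 tt_inj; have [[g_size _] _] := g_param.
apply: (@coplanar_section_rootP _ _ _ _ (fun h => [/\ h != 0, (size h <= 5)%N & h`_3 = 0])).
  move=> a a0; split; [exact: psi_section_poly_neq0 g_param a0 | exact: size_section_poly |].
  by rewrite coef_section_poly big1 // => i _; rewrite g3 mulr0.
by move=> h [h0 h5 h3] roots; apply: (root_last_sum tt_inj h0 h5 roots).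
Qed.

Lemma psi_node_reparam v : is_node ps 4 v -> exists g : 'I_4 -> {poly C},
  [/\ parametrisation g 4 ps 4, pt g 4 (Some 0) = pt g 4 None & proj_eq (pt g 4 None) v].
Proof.
case=> t [u [tu [vt [vu _]]]].
have [_ [k [k0 tk]]] := proj_eq_trans (proj_eq_sym vt) vu.
(* Scaling by a fourth root of k makes the image of oo equal to pt ps t. *)
pose la := 4.-root k; have la4 : la ^+ 4 = k by apply: rootCK.
have la0 : la != 0 by apply: contraNneq k0 => la0; rewrite -la4 la0 expr0n.
have ut : u != t by rewrite eq_sym; apply/eqP.
exists (fun i => reparam4 (la *: hcoord u) (hcoord t) (ps i)); split.
- exact: parametrisation_reparam4 size_psi (unitmx_col_mx_hcoord ut la0) psi_parametrisation.
- by rewrite !pt_reparam4 !hcoord_mul_col_mx scale0r add0r hptZ -!pt_hpt ?la4 -?tk //;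
    apply: size_psi.
- rewrite pt_reparam4 hcoord_mul_col_mx hptZ -pt_hpt ?la4 -?tk //; last exact: size_psi.
  exact: proj_eq_sym.
Qed.

Lemma psi_cusp_reparam v : is_cusp ps 4 v -> exists g : 'I_4 -> {poly C},
  [/\ parametrisation g 4 ps 4, (forall i, (g i)`_3 = 0) & proj_eq (pt g 4 None) v].
Proof.
case=> -[x|] [vt [_ not_imm]]; last by case: not_imm; apply: psi_immersive_oo.
have [k /rowP dk] := proportional_of_rank_col_mx not_imm (proj1 vt).
pose u := hcoord (Some x); pose w := delta_mx 0 0 - (k / 4) *: u.
have uw : col_mx u w \in unitmx.
  rewrite unitmx_col_mx2 !mxE /=.
  by rewrite (_ : _ - _ = -1) ?oppr_eq0 ?oner_eq0 //; ring.
exists (fun i => reparam4 u w (ps i)); split.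
- exact: parametrisation_reparam4 size_psi uw psi_parametrisation.
- move=> i; rewrite coef3_reparam4_cusp ?size_psi ?pnatr_eq0 //.
  by move: (dk i); rewrite !mxE => ->; rewrite subrr.
- by rewrite pt_reparam4 hcoord_mul_col_mx -pt_hpt; [apply: proj_eq_sym | apply: size_psi].
Qed.

End Psi.

Theorem lemma5p2 (R : realType) (p q r s : R[i]) :
  (r != s ^+ 2 \/ q != s ^+ 3 \/ p != s ^+ 4) ->
  first_species (curve (psi p q r s) 4) ->
  (forall v : 'rV[R[i]]_4, is_node (psi p q r s) 4 v ->
     exists (g : 'I_4 -> {poly R[i]}) (e : nat),
       [/\ parametrisation g e (psi p q r s) 4,
           proj_eq (pt g e (Some 0)) v,
           proj_eq (pt g e None) v &
           forall tt : 'I_4 -> R[i],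
             (forall i j, i != j -> ~ proj_eq (pt g e (Some (tt i))) (pt g e (Some (tt j)))) ->
             (forall i, ~ proj_eq (pt g e (Some (tt i))) v) ->
             (coplanar (fun i => pt g e (Some (tt i))) <-> \prod_(i < 4) tt i = 1)])
  /\
  (forall v : 'rV[R[i]]_4, is_cusp (psi p q r s) 4 v ->
     exists (g : 'I_4 -> {poly R[i]}) (e : nat),
       [/\ parametrisation g e (psi p q r s) 4,
           proj_eq (pt g e None) v &
           forall tt : 'I_4 -> R[i],
             (forall i j, i != j -> ~ proj_eq (pt g e (Some (tt i))) (pt g e (Some (tt j)))) ->
             (forall i, ~ proj_eq (pt g e (Some (tt i))) v) ->
             (coplanar (fun i => pt g e (Some (tt i))) <-> \sum_(i < 4) tt i = 0)]).
Proof.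
move=> pqrs _; split=> v.
  case/(psi_node_reparam pqrs)=> g [g_param g0oo gv].
  exists g, 4%N; split=> //; first by rewrite g0oo.
  move=> tt distinct _; apply: (node_coplanar g_param g0oo).
  exact: injective_of_distinct_pts (proj1 g_param) distinct.
case/(psi_cusp_reparam pqrs)=> g [g_param g3 gv].
exists g, 4%N; split=> // tt distinct _; apply: (cusp_coplanar g_param g3).
exact: injective_of_distinct_pts (proj1 g_param) distinct.
Qed.
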